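(* For $I=1,2$ let $x_I\in\mathbb{R}$, $z_I\in\mathbb{C}$ with $z_2\neq0$, let $\vec r_I=(z_I+\bar z_I,\,-i(z_I-\bar z_I),\,x_I)\in\mathbb{R}^3$, $r_I=|\vec r_I|$, and define $$F=\frac{r_1^2r_2^2-(\vec r_1\cdot\vec r_2)^2}{2r_2|z_2|^2}+\frac{r_2(z_1\bar z_2-z_2\bar z_1)^2}{|z_2|^4},$$ regarded as a function of the independent real variables $x_1,x_2$ and complex variables $z_1,z_2$. Let $K=F-x_1\frac{\partial F}{\partial x_1}-x_2\frac{\partial F}{\partial x_2}$ (equivalently, $K=F-x_1(u_1+\bar u_1)-x_2(u_2+\bar u_2)$ with $\partial F/\partial x_I=u_I+\bar u_I$). Then $$K=-\frac{2\,|\vec r_1\times\vec r_2|^2}{r_2^3}.$$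
   Context: $F$ is the closed-form (residue) evaluation of the generalized Legendre transform function $\frac{1}{2\pi i}\oint\frac{d\zeta}{\zeta}\frac{(\eta_1^{(2)})^2}{\eta_2^{(2)}}$ for the ${\cal O}(2)$ multiplets $\eta^{(2)}_I=\frac{\bar z_I}{\zeta}+x_I-z_I\zeta$; $K$ is the resulting hyperkähler potential of the associated 8-dimensional Swann bundle. *)

From Stdlib Require Import Reals.
From Coquelicot Require Import Coquelicot.
Open Scope R_scope.

Definition vec3 : Type := (R * R * R)%type.
Definition dot3 (u v : vec3) : R :=
  let '(u1, u2, u3) := u in let '(v1, v2, v3) := v in u1 * v1 + u2 * v2 + u3 * v3.
Definition norm3 (u : vec3) : R := sqrt (dot3 u u).
Definition cross3 (u v : vec3) : vec3 :=
  let '(u1, u2, u3) := u in let '(v1, v2, v3) := v in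
  (u2 * v3 - u3 * v2, u3 * v1 - u1 * v3, u1 * v2 - u2 * v1).

(* r_I = (z_I + conj z_I, -i (z_I - conj z_I), x_I); the first two entries are real
   complex numbers, we take their real parts. *)
Definition rvec (x : R) (z : C) : vec3 :=
  (Re (z + Cconj z), Re ((- Ci) * (z - Cconj z)), x).

(* F(x1,x2,z1,z2).  The complex number (z1 conj z2 - z2 conj z1)^2 is real
   (square of a purely imaginary number); we take its real part. *)
Definition Ffun (x1 x2 : R) (z1 z2 : C) : R :=
  let r1 := norm3 (rvec x1 z1) in
  let r2 := norm3 (rvec x2 z2) in
  let d := dot3 (rvec x1 z1) (rvec x2 z2) in
  (r1 ^ 2 * r2 ^ 2 - d ^ 2) / (2 * r2 * (Cmod z2) ^ 2)
  + r2 * Re ((z1 * Cconj z2 - z2 * Cconj z1) ^ 2) / (Cmod z2) ^ 4.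

Definition Kfun (x1 x2 : R) (z1 z2 : C) : R :=
  Ffun x1 x2 z1 z2
  - x1 * Derive (fun t => Ffun t x2 z1 z2) x1
  - x2 * Derive (fun t => Ffun x1 t z1 z2) x2.

From Stdlib Require Import Reals Lra.
From Coquelicot Require Import Coquelicot.
Open Scope R_scope.

(* Write r_I = (v_I, x_I) with v_I in R^2, and p1 = |v1|^2, p2 = |v2|^2, e = v1.v2.
   Then F = 2 N / (p2 r2) - 4 r2 (p1 p2 - e^2) / p2^2 with r2 = sqrt (p2 + x2^2), where
   N = |r1 x r2|^2 = r1^2 r2^2 - (r1.r2)^2 is the constant p1 p2 - e^2 plus a quadratic
   form in (x1, x2).  The operator 1 - x1 d/dx1 - x2 d/dx2 flips the sign of that quadratic
   part, and the terms coming from the x2-dependence of r2 combine, through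
   r2^2 = p2 + x2^2, with those of the second summand into - 2 N / r2^3. *)

Lemma dot3_rvec (x1 x2 : R) (z1 z2 : C) :
  dot3 (rvec x1 z1) (rvec x2 z2) = 4 * Re (z1 * Cconj z2) + x1 * x2.
Proof. destruct z1, z2; unfold rvec, dot3, Cconj; simpl; ring. Qed.

Lemma dot3_rvec_self (x : R) (z : C) : dot3 (rvec x z) (rvec x z) = 4 * Cmod z ^ 2 + x ^ 2.
Proof. rewrite dot3_rvec, Cmod2_alt; destruct z; simpl; ring. Qed.

Lemma Re_sq_sub_conj (z1 z2 : C) :
  Re ((z1 * Cconj z2 - z2 * Cconj z1) ^ 2)
  = -4 * (Cmod z1 ^ 2 * Cmod z2 ^ 2 - Re (z1 * Cconj z2) ^ 2).
Proof. rewrite !Cmod2_alt; destruct z1, z2; simpl; ring. Qed.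

Lemma norm3_cross3_sq (u v : vec3) :
  norm3 (cross3 u v) ^ 2 = dot3 u u * dot3 v v - dot3 u v ^ 2.
Proof.
  destruct u as [[u1 u2] u3], v as [[v1 v2] v3].
  unfold norm3; rewrite pow2_sqrt; simpl.
  - ring.
  - repeat apply Rplus_le_le_0_compat; apply Rle_0_sqr.
Qed.

Section GramPotential.
Variables p1 p2 e : R.
Hypothesis p2_pos : 0 < p2.

Definition gram t u := (p1 + t ^ 2) * (p2 + u ^ 2) - (e + t * u) ^ 2.

Definition F_gram t u :=
  2 * gram t u / (p2 * sqrt (p2 + u ^ 2))
  - 4 * sqrt (p2 + u ^ 2) * (p1 * p2 - e ^ 2) / p2 ^ 2.

Let sqrt_pos u : 0 < sqrt (p2 + u ^ 2).
Proof. apply sqrt_lt_R0; nra. Qed.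

Lemma is_derive_F_gram_l t u :
  is_derive (fun t : R => F_gram t u) t
    (2 * (2 * t * (p2 + u ^ 2) - 2 * (e + t * u) * u) / (p2 * sqrt (p2 + u ^ 2))).
Proof.
  pose proof (sqrt_pos u).
  unfold F_gram, gram; auto_derive; [exact I |].
  replace (p2 + u * (u * 1)) with (p2 + u ^ 2) by ring; field; lra.
Qed.

Lemma is_derive_F_gram_r t u :
  is_derive (fun u : R => F_gram t u) u
    (2 * (2 * u * (p1 + t ^ 2) - 2 * (e + t * u) * t) / (p2 * sqrt (p2 + u ^ 2))
     - 2 * gram t u * u / (p2 * sqrt (p2 + u ^ 2) ^ 3)
     - 4 * (u / sqrt (p2 + u ^ 2)) * (p1 * p2 - e ^ 2) / p2 ^ 2).
Proof.
  pose proof (sqrt_pos u).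
  unfold F_gram, gram; auto_derive;
    replace (p2 + u * (u * 1)) with (p2 + u ^ 2) by ring.
  - repeat split; nra.
  - field; lra.
Qed.

Lemma F_gram_euler t u :
  F_gram t u - t * Derive (fun t => F_gram t u) t - u * Derive (fun u => F_gram t u) u
  = - (2 * gram t u) / sqrt (p2 + u ^ 2) ^ 3.
Proof.
  rewrite (is_derive_unique _ _ _ (is_derive_F_gram_l t u)),
          (is_derive_unique _ _ _ (is_derive_F_gram_r t u)).
  assert (s_pos := sqrt_pos u).
  assert (s_sq : sqrt (p2 + u ^ 2) ^ 2 = p2 + u ^ 2) by (apply pow2_sqrt; nra).
  unfold F_gram, gram.
  set (s := sqrt (p2 + u ^ 2)) in *; clearbody s.
  (* The identity only holds modulo s^2 = p2 + u^2: eliminate p2. *)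
  replace p2 with (s ^ 2 - u ^ 2) by lra.
  field; lra.
Qed.
End GramPotential.

Lemma Ffun_F_gram (x1 x2 : R) (z1 z2 : C) : z2 <> 0%C ->
  Ffun x1 x2 z1 z2
  = F_gram (4 * Cmod z1 ^ 2) (4 * Cmod z2 ^ 2) (4 * Re (z1 * Cconj z2)) x1 x2.
Proof.
  intro hz2.
  assert (mod_pos : 0 < Cmod z2) by (apply Cmod_gt_0; exact hz2).
  assert (r2_pos : 0 < sqrt (4 * Cmod z2 ^ 2 + x2 ^ 2)) by (apply sqrt_lt_R0; nra).
  unfold Ffun, F_gram, gram, norm3.
  rewrite !dot3_rvec_self, dot3_rvec, Re_sq_sub_conj, !pow2_sqrt by nra.
  field; lra.
Qed.

Theorem mainTheorem3 (x1 x2 : R) (z1 z2 : C) (hz2 : z2 <> 0%C) :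
  Kfun x1 x2 z1 z2 =
  - (2 * (norm3 (cross3 (rvec x1 z1) (rvec x2 z2))) ^ 2)
    / (norm3 (rvec x2 z2)) ^ 3.
Proof.
  assert (p2_pos : 0 < 4 * Cmod z2 ^ 2).
  { assert (0 < Cmod z2) by (apply Cmod_gt_0; exact hz2); nra. }
  unfold Kfun.
  rewrite (Derive_ext _ _ _ (fun t => Ffun_F_gram t x2 z1 z2 hz2)),
          (Derive_ext _ _ _ (fun u => Ffun_F_gram x1 u z1 z2 hz2)),
          Ffun_F_gram, F_gram_euler by assumption.
  rewrite norm3_cross3_sq, !dot3_rvec_self, dot3_rvec.
  unfold norm3; rewrite dot3_rvec_self.
  reflexivity.
Qed.
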